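(* Let $p>1$, $\alpha\in\mathbb{R}$. For each $T>0$ there exists exactly one positive solution $\psi$ of $$\psi'(t)=\psi^p(t)\ln^\alpha(\psi^2(t)+2),\qquad \lim_{t\to T}\psi(t)=+\infty.$$ Moreover, $$\psi(t)\sim\kappa_\alpha(T-t)^{-\frac1{p-1}}|\ln(T-t)|^{-\frac{\alpha}{p-1}}\quad\text{as }t\to T,\qquad \kappa_\alpha=(p-1)^{-\frac1{p-1}}\left(\frac{p-1}2\right)^{\frac{\alpha}{p-1}}.$$ *)

From Stdlib Require Import Reals.
From Coquelicot Require Import Coquelicot.
Open Scope R_scope.

(* Right-hand side of the ODE:  f(s) = s^p * ln^alpha(s^2 + 2), for s > 0
   (real powers via Rpower; ln(s^2+2) >= ln 2 > 0). *)
Definition rhs (p alpha s : R) : R :=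
  Rpower s p * Rpower (ln (s ^ 2 + 2)) alpha.

Definition blowup_solution (p alpha T : R) (psi : R -> R) : Prop :=
  (forall t, 0 < t < T -> 0 < psi t) /\
  (forall t, 0 < t < T -> is_derive psi t (rhs p alpha (psi t))) /\
  filterlim psi (at_left T) (Rbar_locally p_infty).

Definition kappa (p alpha : R) : R :=
  Rpower (p - 1) (- / (p - 1)) * Rpower ((p - 1) / 2) (alpha / (p - 1)).

Definition profile (p alpha T t : R) : R :=
  kappa p alpha * Rpower (T - t) (- / (p - 1))
    * Rpower (Rabs (ln (T - t))) (- alpha / (p - 1)).

(* Put g = 1/f, f the right-hand side, and G(s) = int_s^oo g. Since g(s) >= c/s near 0 and
   g is integrable at oo, G decreases from +oo to 0. Along a positive solution G(psi(t)) + t is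
   constant, and blow-up at T forces G(psi(t)) = T - t: this determines psi, and conversely
   defines it.
   With l(s) = ln(s^2 + 2), F(s) = s^(1-p) l(s)^(-alpha) / (p-1) satisfies F' = -g (1 + r) with
   r = O(1/l) -> 0, hence G ~ F at oo. So F(psi(t)) ~ T - t, and taking logarithms gives
   l(psi(t)) ~ 2 |ln(T-t)| / (p-1); substituting both into psi / profile gives the limit 1. *)

From Stdlib Require Import Reals Lra Classical ClassicalEpsilon.
From Coquelicot Require Import Coquelicot.
Open Scope R_scope.

Lemma derive_nonneg_le (f df : R -> R) (a b : R) : a <= b ->
  (forall x, a <= x <= b -> is_derive f x (df x)) ->
  (forall x, a <= x <= b -> 0 <= df x) -> f a <= f b.
Proof.
  intros Hab Hd Hpos. destruct (Req_dec a b) as [<-|Hne]; [lra|].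
  destruct (MVT_cor2 f df a b) as [c [Hc Hc']]; [lra| |].
  - intros c Hc. apply is_derive_Reals. auto.
  - assert (0 <= df c) by (apply Hpos; lra). nra.
Qed.

Lemma derive_nonpos_lim0_ge0 (f df : R -> R) (s : R) :
  (forall x, s <= x -> is_derive f x (df x)) -> (forall x, s <= x -> df x <= 0) ->
  filterlim f (Rbar_locally p_infty) (locally 0) -> 0 <= f s.
Proof.
  intros Hd Hneg Hlim. destruct (Rle_lt_dec 0 (f s)) as [|Hfs]; auto.
  destruct (proj1 (filterlim_locally f 0) Hlim (mkposreal (- f s) ltac:(lra))) as [M HM].
  set (x := Rmax s (M + 1)).
  assert (Hx : s <= x) by apply Rmax_l.
  assert (Hball : Rabs (f x - 0) < - f s).
  { apply HM. pose proof (Rmax_r s (M + 1)). unfold x. lra. }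
  assert (f x <= f s).
  { enough (- f s <= - f x) by lra.
    apply (derive_nonneg_le (fun y => - f y) (fun y => - df y)); auto.
    - intros y Hy. apply (is_derive_opp f y (df y)), Hd. lra.
    - intros y Hy. pose proof (Hneg y ltac:(lra)). lra. }
  pose proof (Rle_abs (- (f x - 0))). rewrite Rabs_Ropp in *. lra.
Qed.

Lemma derive_zero_const (f : R -> R) (a b : R) :
  (forall x, a < x < b -> is_derive f x 0) ->
  forall x y, a < x < b -> a < y < b -> f x = f y.
Proof.
  intros Hd.
  assert (Hord : forall x y, a < x < b -> a < y < b -> x <= y -> f x = f y).
  { intros x y Hx Hy Hxy. apply Rle_antisym.
    - apply (derive_nonneg_le f (fun _ => 0)); auto; [intros z Hz; apply Hd; lra | intros; lra].
    - enough (- f x <= - f y) by lra.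
      apply (derive_nonneg_le (fun z => - f z) (fun _ => 0)); auto; [|intros; lra].
      intros z Hz. rewrite <- Ropp_0. apply (is_derive_opp f z 0), Hd. lra. }
  intros x y Hx Hy. destruct (Rle_lt_dec x y); [auto | symmetry; apply Hord; auto; lra].
Qed.

Lemma filterlim_pinfty_eps (h : R -> R) (l e : R) :
  filterlim h (Rbar_locally p_infty) (locally l) -> 0 < e ->
  exists S, 0 < S /\ forall s, S <= s -> Rabs (h s - l) < e.
Proof.
  intros Hlim He.
  destruct (proj1 (filterlim_locally h l) Hlim (mkposreal e He)) as [M HM].
  exists (Rmax 1 (M + 1)). split.
  - pose proof (Rmax_l 1 (M + 1)). lra.
  - intros s Hs. apply HM. pose proof (Rmax_r 1 (M + 1)). lra.
Qed.

Lemma at_left_interval (a T : R) : a < T -> at_left T (fun y => a < y < T).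
Proof.
  intros HaT. exists (mkposreal (T - a) ltac:(lra)). intros y Hy HyT.
  change (Rabs (y - T) < T - a) in Hy. apply Rabs_def2 in Hy. lra.
Qed.

Lemma exp_le_compat x y : x <= y -> exp x <= exp y.
Proof. intros [Hlt| ->]; [left; apply exp_increasing; auto | right; reflexivity]. Qed.

Lemma is_lim_mult_pinfty_neg (f h : R -> R) (x : Rbar) (l : R) :
  is_lim f x p_infty -> is_lim h x l -> l < 0 -> is_lim (fun y => f y * h y) x m_infty.
Proof.
  intros Hf Hh Hl.
  assert (Hm : Rbar_mult p_infty l = m_infty).
  { simpl. case (Rle_dec 0 l); intros; [exfalso; lra | reflexivity]. }
  rewrite <- Hm. apply is_lim_mult; auto. simpl. lra.
Qed.

Lemma filterlim_Rplus {X : Type} {FF : (X -> Prop) -> Prop} {HF : Filter FF}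
  (f g : X -> R) (a b : R) :
  filterlim f FF (locally a) -> filterlim g FF (locally b) ->
  filterlim (fun x => f x + g x) FF (locally (a + b)).
Proof. intros Hf Hg. exact (filterlim_comp_2 f g Rplus Hf Hg (filterlim_plus a b)). Qed.

Lemma filterlim_Rmult {X : Type} {FF : (X -> Prop) -> Prop} {HF : Filter FF}
  (f g : X -> R) (a b : R) :
  filterlim f FF (locally a) -> filterlim g FF (locally b) ->
  filterlim (fun x => f x * g x) FF (locally (a * b)).
Proof. intros Hf Hg. exact (filterlim_comp_2 f g Rmult Hf Hg (filterlim_mult a b)). Qed.

Lemma filterlim_continuous_comp {X : Type} {FF : (X -> Prop) -> Prop} {HF : Filter FF}
  (f : X -> R) (h : R -> R) (a : R) :
  filterlim f FF (locally a) -> continuous h a ->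
  filterlim (fun x => h (f x)) FF (locally (h a)).
Proof. intros Hf Hh. exact (filterlim_comp _ _ _ f h FF (locally a) _ Hf Hh). Qed.

Lemma filterlim_lin_comb_0 {X : Type} {FF : (X -> Prop) -> Prop} {HF : Filter FF}
  (f h : X -> R) (a b : R) :
  filterlim f FF (locally 0) -> filterlim h FF (locally 0) ->
  filterlim (fun x => a * f x + b * h x) FF (locally 0).
Proof.
  intros Hf Hh.
  pose proof (filterlim_Rplus _ _ _ _ (filterlim_Rmult _ _ a 0 (filterlim_const a) Hf)
    (filterlim_Rmult _ _ b 0 (filterlim_const b) Hh)) as Hlim.
  rewrite !Rmult_0_r, Rplus_0_r in Hlim. exact Hlim.
Qed.

Lemma sup_pos_exists (h : R -> R) :
  (exists B, forall s, 0 < s -> h s <= B) ->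
  exists L, (forall s, 0 < s -> h s <= L) /\
            (forall e, 0 < e -> exists s, 0 < s /\ L - e < h s).
Proof.
  intros [B HB].
  destruct (completeness (fun y => exists s, 0 < s /\ y = h s)) as [L [Hub Hleast]].
  - exists B. intros y [s [Hs ->]]. auto.
  - exists (h 1), 1. split; [lra | auto].
  - exists L. split.
    + intros s Hs. apply Hub. exists s. auto.
    + intros e He. apply NNPP. intros Hnone.
      assert (L <= L - e); [|lra].
      apply Hleast. intros y [s [Hs ->]].
      apply Rnot_lt_le. intros Hlt. apply Hnone. exists s. auto.
Qed.

Definition is_tail_primitive (g G : R -> R) : Prop :=
  (forall s, 0 < s -> 0 < G s) /\
  (forall s, 0 < s -> is_derive G s (- g s)) /\
  filterlim G (Rbar_locally p_infty) (locally 0) /\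
  filterlim G (at_right 0) (Rbar_locally p_infty).

Section TailPrimitive.

Variables g F r : R -> R.
Hypothesis g_pos : forall s, 0 < s -> 0 < g s.
Hypothesis g_cont : forall s, 0 < s -> continuous g s.
Hypothesis g_ge_inv : exists c, 0 < c /\ forall s, 0 < s <= 1 -> c / s <= g s.
Hypothesis F_pos : forall s, 0 < s -> 0 < F s.
Hypothesis F_derive : forall s, 0 < s -> is_derive F s (- g s * (1 + r s)).
Hypothesis r_lim : filterlim r (Rbar_locally p_infty) (locally 0).
Hypothesis F_lim : filterlim F (Rbar_locally p_infty) (locally 0).

Let primitive s := RInt g 1 s.

Lemma primitive_derive s : 0 < s -> is_derive primitive s (g s).
Proof.
  intros Hs. apply (is_derive_RInt g primitive 1 s); [|auto].
  exists (mkposreal (s / 2) ltac:(lra)). intros y Hy.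
  change (Rabs (y - s) < s / 2) in Hy. apply Rabs_def2 in Hy.
  apply (RInt_correct (V := R_CompleteNormedModule)).
  apply (ex_RInt_continuous (V := R_CompleteNormedModule)). intros z Hz.
  apply g_cont. pose proof (Rmin_glb_lt 1 y 0 ltac:(lra) ltac:(lra)). lra.
Qed.

Lemma primitive_le_mul_ln : exists c, 0 < c /\ forall s, 0 < s <= 1 -> primitive s <= c * ln s.
Proof.
  destruct g_ge_inv as [c [Hc Hg]]. exists c. split; auto. intros s [Hs0 Hs1].
  assert (Hprim1 : primitive 1 = 0) by exact (RInt_point (V := R_CompleteNormedModule) 1 g).
  enough (primitive s - c * ln s <= primitive 1 - c * ln 1) by (rewrite Hprim1, ln_1 in *; lra).
  apply (derive_nonneg_le (fun x => primitive x - c * ln x) (fun x => g x - c / x)); auto.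
  - intros x Hx. apply (is_derive_minus primitive (fun x => c * ln x));
      [apply primitive_derive; lra|].
    auto_derive; [lra | field; lra].
  - intros x Hx. pose proof (Hg x ltac:(lra)). lra.
Qed.

Lemma primitive_bounded : exists B, forall s, 0 < s -> primitive s <= B.
Proof.
  destruct (filterlim_pinfty_eps r 0 (1 / 2) r_lim ltac:(lra)) as [S [HS Hr]].
  exists (primitive S + 2 * F S). intros s Hs. pose proof (F_pos S HS).
  destruct (Rle_lt_dec s S) as [Hle|Hlt].
  - enough (primitive s <= primitive S) by lra.
    apply (derive_nonneg_le primitive g); auto.
    + intros x Hx. apply primitive_derive. lra.
    + intros x Hx. left. apply g_pos. lra.
  - enough (primitive s + 2 * F s <= primitive S + 2 * F S) by (pose proof (F_pos s Hs); lra).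
    enough (- (primitive S + 2 * F S) <= - (primitive s + 2 * F s)) by lra.
    apply (derive_nonneg_le (fun x => - (primitive x + 2 * F x)) (fun x => g x * (1 + 2 * r x)));
      [lra| |].
    + intros x Hx. replace (g x * (1 + 2 * r x)) with (- (g x + 2 * (- g x * (1 + r x)))) by ring.
      apply (is_derive_opp (fun x => primitive x + 2 * F x)).
      apply (is_derive_plus primitive (fun x => 2 * F x)); [apply primitive_derive; lra|].
      apply (is_derive_scal F), F_derive. lra.
    + intros x Hx. pose proof (g_pos x ltac:(lra)).
      pose proof (Rabs_def2 _ _ (Hr x ltac:(lra))). apply Rmult_le_pos; lra.
Qed.

Lemma tail_primitive_exists : exists G, is_tail_primitive g G.
Proof.
  destruct (sup_pos_exists primitive primitive_bounded) as [L [HL Hsup]].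
  destruct primitive_le_mul_ln as [c [Hc Hln]].
  assert (primitive_mono : forall x y, 0 < x <= y -> primitive x <= primitive y).
  { intros x y Hxy. apply (derive_nonneg_le primitive g); [lra| |].
    - intros z Hz. apply primitive_derive. lra.
    - intros z Hz. left. apply g_pos. lra. }
  exists (fun s => L - primitive s). split; [|split; [|split]].
  - intros s Hs. enough (primitive s < primitive (s + 1)) by (pose proof (HL (s + 1)); lra).
    apply (incr_function_le primitive s (s + 1) g); simpl; try lra.
    + intros x Hx _. apply primitive_derive. lra.
    + intros x Hx _. apply g_pos. lra.
  - intros s Hs. replace (- g s) with (0 - g s) by ring.
    apply (is_derive_minus (fun _ => L) primitive s 0 (g s)).
    + apply (is_derive_const L s).
    + apply primitive_derive. auto.
  - apply filterlim_locally. intros e.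
    destruct (Hsup e (cond_pos e)) as [s1 [Hs1 Hs1']]. exists s1. intros s Hs.
    change (Rabs (L - primitive s - 0) < e).
    pose proof (HL s ltac:(lra)). pose proof (primitive_mono s1 s ltac:(lra)).
    apply Rabs_def1; lra.
  - intros P [M HM]. set (d := Rmin 1 (exp ((L - M) / c))).
    assert (Hd : 0 < d) by (apply Rmin_glb_lt; [lra | apply exp_pos]).
    exists (mkposreal d Hd). intros s Hs Hs0.
    change (Rabs (s - 0) < d) in Hs. rewrite Rminus_0_r, Rabs_right in Hs by lra.
    assert (Hd1 : d <= 1) by apply Rmin_l.
    assert (Hdexp : d <= exp ((L - M) / c)) by apply Rmin_r.
    apply HM.
    assert (Hlns : ln s < (L - M) / c).
    { rewrite <- (ln_exp ((L - M) / c)). apply ln_increasing; lra. }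
    apply (Rmult_lt_compat_l c) in Hlns; auto.
    replace (c * ((L - M) / c)) with (L - M) in Hlns by (field; lra).
    pose proof (Hln s ltac:(lra)). lra.
Qed.

Lemma tail_primitive_sandwich G e : is_tail_primitive g G -> 0 < e ->
  exists S, 0 < S /\ forall s, S <= s -> (1 - e) * G s <= F s <= (1 + e) * G s.
Proof.
  intros [_ [G_derive [G_lim _]]] He.
  destruct (filterlim_pinfty_eps r 0 e r_lim He) as [S [HS Hr]].
  exists S. split; auto. intros s Hs.
  assert (Hsmall : forall x, S <= x -> 0 < g x /\ - e < r x < e).
  { intros x Hx. pose proof (Rabs_def2 _ _ (Hr x Hx)). split; [apply g_pos|]; lra. }
  (* Beyond S, F - (1-e) G and (1+e) G - F are nonincreasing with limit 0. *)
  split.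
  - enough (0 <= 1 * F s + (- (1 - e)) * G s) by lra.
    apply (derive_nonpos_lim0_ge0 (fun x => 1 * F x + (- (1 - e)) * G x)
      (fun x => - g x * (e + r x))).
    + intros x Hx.
      replace (- g x * (e + r x)) with (1 * (- g x * (1 + r x)) + (- (1 - e)) * (- g x)) by ring.
      apply (is_derive_plus (fun x => 1 * F x) (fun x => - (1 - e) * G x));
        apply is_derive_scal; [apply F_derive | apply G_derive]; lra.
    + intros x Hx. destruct (Hsmall x ltac:(lra)). nra.
    + apply filterlim_lin_comb_0; auto.
  - enough (0 <= (1 + e) * G s + (- 1) * F s) by lra.
    apply (derive_nonpos_lim0_ge0 (fun x => (1 + e) * G x + (- 1) * F x)
      (fun x => - g x * (e - r x))).
    + intros x Hx.
      replace (- g x * (e - r x)) with ((1 + e) * (- g x) + (- 1) * (- g x * (1 + r x))) by ring.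
      apply (is_derive_plus (fun x => (1 + e) * G x) (fun x => - 1 * F x));
        apply is_derive_scal; [apply G_derive | apply F_derive]; lra.
    + intros x Hx. destruct (Hsmall x ltac:(lra)). nra.
    + apply filterlim_lin_comb_0; auto.
Qed.

Lemma tail_primitive_equiv G : is_tail_primitive g G ->
  filterlim (fun s => F s / G s) (Rbar_locally p_infty) (locally 1).
Proof.
  intros HG. apply filterlim_locally. intros e.
  pose proof (cond_pos e) as He.
  destruct (tail_primitive_sandwich G (e / 2) HG ltac:(lra)) as [S [HS Hsand]].
  exists S. intros s Hs. change (Rabs (F s / G s - 1) < e).
  destruct HG as [G_pos _]. pose proof (G_pos s ltac:(lra)). pose proof (Hsand s ltac:(lra)).
  replace (F s / G s - 1) with ((F s - G s) / G s) by (field; lra).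
  apply Rabs_def1; [apply Rlt_div_l | apply Rlt_div_r]; nra.
Qed.

End TailPrimitive.

Section TailPrimitiveInverse.

Variables (g G : R -> R) (T : R).
Hypothesis g_pos : forall s, 0 < s -> 0 < g s.
Hypothesis G_tail : is_tail_primitive g G.
Hypothesis T_pos : 0 < T.

Lemma tail_primitive_decreasing x y : 0 < x -> x < y -> G y < G x.
Proof.
  intros Hx Hxy. destruct G_tail as [_ [G_derive _]].
  enough (- G x < - G y) by lra.
  apply (incr_function (fun s => - G s) 0 p_infty g); simpl; auto.
  - intros s Hs _. rewrite <- (Ropp_involutive (g s)).
    apply (is_derive_opp G s (- g s)), G_derive. auto.
  - intros s Hs _. apply g_pos. auto.
Qed.

Lemma tail_primitive_inj x y : 0 < x -> 0 < y -> G x = G y -> x = y.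
Proof.
  intros Hx Hy HGxy. destruct (Rtotal_order x y) as [Hlt|[Heq|Hlt]]; auto.
  - pose proof (tail_primitive_decreasing x y Hx Hlt). lra.
  - pose proof (tail_primitive_decreasing y x Hy Hlt). lra.
Qed.

Lemma tail_primitive_continuous s : 0 < s -> continuity_pt G s.
Proof.
  intros Hs. apply derivable_continuous_pt. exists (- g s).
  apply is_derive_Reals. apply G_tail. auto.
Qed.

Lemma tail_primitive_inverse_exists :
  exists psi : R -> R, forall t, 0 < t < T -> 0 < psi t /\ G (psi t) = T - t.
Proof.
  assert (Hlevel : forall t, exists s, 0 < t < T -> 0 < s /\ G s = T - t).
  { intros t. destruct (Rlt_dec 0 t) as [Ht0|Ht0]; [|exists 0; lra].
    destruct (Rlt_dec t T) as [HtT|HtT]; [|exists 0; lra].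
    destruct G_tail as [_ [_ [G_lim_pinfty G_lim_0]]].
    destruct (filterlim_pinfty_eps G 0 (T - t) G_lim_pinfty ltac:(lra)) as [S [HS HGS]].
    destruct (G_lim_0 (fun y => T - t < y) (ex_intro _ (T - t) (fun y Hy => Hy))) as [d Hd].
    set (a := Rmin (d / 2) (S / 2)).
    assert (Ha : 0 < a) by (apply Rmin_glb_lt; pose proof (cond_pos d); lra).
    assert (Had : a <= d / 2) by apply Rmin_l.
    assert (HaS : a <= S / 2) by apply Rmin_r.
    assert (HGa : T - t < G a).
    { apply Hd; [|lra]. change (Rabs (a - 0) < d).
      rewrite Rminus_0_r, Rabs_right by lra. pose proof (cond_pos d). lra. }
    pose proof (Rabs_def2 _ _ (HGS S ltac:(lra))).
    destruct (Ranalysis5.IVT_interv (fun s => T - t - G s) a S) as [z [Hz HGz]]; try lra.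
    - intros x Hx. apply continuity_pt_minus; [apply continuity_pt_const; intros ? ?; auto|].
      apply tail_primitive_continuous. lra.
    - exists z. intros _. split; lra. }
  exists (fun t => proj1_sig (constructive_indefinite_description _ (Hlevel t))).
  intros t Ht. destruct (constructive_indefinite_description _ (Hlevel t)) as [s Hs]. auto.
Qed.

Lemma blowup_solution_on_level_set (phi : R -> R) :
  (forall t, 0 < t < T -> 0 < phi t) ->
  (forall t, 0 < t < T -> is_derive phi t (/ g (phi t))) ->
  filterlim phi (at_left T) (Rbar_locally p_infty) ->
  forall t, 0 < t < T -> G (phi t) = T - t.
Proof.
  intros phi_pos phi_derive phi_blowup t Ht.
  destruct G_tail as [_ [G_derive [G_lim _]]].
  assert (Hconst : forall y, 0 < y < T -> G (phi y) + y = G (phi t) + t).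
  { intros y Hy. apply (derive_zero_const (fun x => G (phi x) + x) 0 T); auto.
    intros x Hx. pose proof (g_pos (phi x) (phi_pos x Hx)).
    replace 0 with (/ g (phi x) * - g (phi x) + 1) by (field; lra).
    apply (is_derive_plus (fun x => G (phi x)) (fun x => x)).
    - apply (is_derive_comp G phi); [apply G_derive, phi_pos | apply phi_derive]; auto.
    - apply (is_derive_id x). }
  assert (Hlim : filterlim (fun y => G (phi y) + y) (at_left T) (locally (0 + T))).
  { apply filterlim_Rplus.
    - exact (filterlim_comp _ _ _ phi G _ _ _ phi_blowup G_lim).
    - intros P [e He]. exists e. intros y Hy _. apply He. exact Hy. }
  assert (Hlim' : filterlim (fun y => G (phi y) + y) (at_left T) (locally (G (phi t) + t))).
  { apply (filterlim_ext_loc (fun _ => G (phi t) + t)); [|apply filterlim_const].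
    apply (filter_imp (fun y => 0 < y < T)); [|apply at_left_interval; lra].
    intros y Hy. symmetry. auto. }
  pose proof (filterlim_locally_unique _ _ _ Hlim Hlim'). lra.
Qed.

Section LevelSetParametrization.

Variable psi : R -> R.
Hypothesis psi_level : forall t, 0 < t < T -> 0 < psi t /\ G (psi t) = T - t.

Lemma level_set_increasing x y : 0 < x -> x < y -> y < T -> psi x < psi y.
Proof.
  intros Hx Hxy HyT.
  destruct (psi_level x ltac:(lra)) as [Px Gx]. destruct (psi_level y ltac:(lra)) as [Py Gy].
  destruct (Rtotal_order (psi x) (psi y)) as [|[Heq|Hlt]]; auto.
  - rewrite Heq in Gx. lra.
  - pose proof (tail_primitive_decreasing _ _ Py Hlt). lra.
Qed.

Lemma level_set_derive t : 0 < t < T -> is_derive psi t (/ g (psi t)).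
Proof.
  intros Ht. set (Phi := fun s => T - G s).
  assert (Phi_derive : forall s, 0 < s -> derivable_pt_lim Phi s (g s)).
  { intros s Hs. apply is_derive_Reals. replace (g s) with (0 - - g s) by ring.
    apply (is_derive_minus (fun _ => T) G s 0 (- g s));
      [apply (is_derive_const T s) | apply G_tail; auto]. }
  set (t1 := t / 2). set (t2 := (t + T) / 2).
  assert (Ht1 : 0 < t1 < t) by (unfold t1; lra). assert (Ht2 : t < t2 < T) by (unfold t2; lra).
  destruct (psi_level t1 ltac:(lra)) as [P1 G1]. destruct (psi_level t2 ltac:(lra)) as [P2 G2].
  assert (Phi_psi : forall x, t1 <= x <= t2 -> comp Phi psi x = id x).
  { intros x Hx. unfold comp, id, Phi. rewrite (proj2 (psi_level x ltac:(lra))). ring. }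
  assert (psi_bounds : forall x, t1 <= x <= t2 -> psi t1 <= psi x <= psi t2).
  { intros x Hx. split; [destruct (Req_dec t1 x) as [<-|]|destruct (Req_dec x t2) as [->|]];
      try lra; left; apply level_set_increasing; lra. }
  assert (Prf : forall s, psi t1 <= s <= psi t2 -> derivable_pt Phi s).
  { intros s Hs. exists (g s). apply Phi_derive. lra. }
  assert (psi_cont : continuity_pt psi t).
  { apply (Ranalysis5.continuity_pt_recip_interv Phi psi (psi t1) (psi t2)).
    - apply level_set_increasing; lra.
    - intros x y Hx Hxy Hy. unfold Phi.
      pose proof (tail_primitive_decreasing x y ltac:(lra) Hxy). lra.
    - unfold Phi. rewrite G1, G2. intros x Hx1 Hx2. apply Phi_psi. lra.
    - unfold Phi. rewrite G1, G2. intros x Hx1 Hx2. apply psi_bounds. lra.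
    - intros s Hs. apply derivable_continuous_pt, Prf. auto.
    - unfold Phi. rewrite G1, G2. lra. }
  assert (Hbound : psi t1 <= psi t <= psi t2) by (apply psi_bounds; lra).
  assert (Pt : 0 < psi t) by lra.
  pose proof (g_pos (psi t) Pt).
  pose proof (Ranalysis5.derivable_pt_lim_recip_interv Phi psi t1 t2 t Prf psi_cont
    ltac:(lra) ltac:(lra) Hbound Phi_psi) as Hrecip.
  rewrite (derive_pt_eq_0 Phi (psi t) (g (psi t)) (Prf (psi t) Hbound) (Phi_derive _ Pt)) in Hrecip.
  apply is_derive_Reals. replace (/ g (psi t)) with (1 / g (psi t)) by (field; lra).
  apply Hrecip. lra.
Qed.

Lemma level_set_blowup : filterlim psi (at_left T) (Rbar_locally p_infty).
Proof.
  intros P [M HM]. set (M' := Rmax M 1).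
  assert (HM' : 0 < M') by (pose proof (Rmax_r M 1); unfold M'; lra).
  destruct G_tail as [G_pos _]. pose proof (G_pos M' HM') as HGM.
  unfold filtermap. apply (filter_imp (fun y => Rmax 0 (T - G M') < y < T)).
  - intros y Hy. pose proof (Rmax_l 0 (T - G M')). pose proof (Rmax_r 0 (T - G M')).
    destruct (psi_level y ltac:(lra)) as [Py Gy].
    apply HM. apply Rle_lt_trans with M'; [apply Rmax_l|].
    apply Rnot_le_lt. intros [Hlt|Heq].
    + pose proof (tail_primitive_decreasing (psi y) M' Py Hlt). lra.
    + rewrite Heq in Gy. lra.
  - apply at_left_interval. apply Rmax_lub_lt; lra.
Qed.

End LevelSetParametrization.

End TailPrimitiveInverse.

Definition ell (s : R) : R := ln (s ^ 2 + 2).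

Lemma ell_pos s : 0 < ell s.
Proof. unfold ell. rewrite <- ln_1. apply ln_increasing; nra. Qed.

Lemma ell_lim : is_lim ell p_infty p_infty.
Proof.
  apply (is_lim_le_p_loc ln); [|apply is_lim_ln_p].
  exists 0. intros s Hs. unfold ell. apply ln_le; nra.
Qed.

Lemma inv_ell_lim : is_lim (fun s => / ell s) p_infty 0.
Proof.
  apply (is_lim_inv ell p_infty p_infty ell_lim). discriminate.
Qed.

Lemma ln_ell_div_ell_lim : is_lim (fun s => ln (ell s) / ell s) p_infty 0.
Proof.
  apply (is_lim_comp (fun y => ln y / y) ell p_infty 0 p_infty is_lim_div_ln_p ell_lim).
  exists 0. intros s _. discriminate.
Qed.

Lemma two_ln_div_ell_lim : is_lim (fun s => 2 * ln s / ell s) p_infty 1.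
Proof.
  assert (Hlim_lo : is_lim (fun s => 1 - ln 3 * / ell s) p_infty 1).
  { apply (is_lim_minus (fun _ => 1) (fun s => ln 3 * / ell s) p_infty 1 (Rbar_mult (ln 3) 0)).
    - apply is_lim_const.
    - apply (is_lim_mult (fun _ => ln 3) (fun s => / ell s));
        [apply is_lim_const | apply inv_ell_lim | simpl; auto].
    - unfold is_Rbar_minus, is_Rbar_plus. simpl. f_equal. f_equal. ring. }
  refine (is_lim_le_le_loc _ _ _ p_infty 1 _ Hlim_lo (is_lim_const 1 p_infty)).
  exists 1. intros s Hs. pose proof (ell_pos s).
  assert (Hbound : 2 * ln s <= ell s <= ln 3 + 2 * ln s).
  { unfold ell. replace (2 * ln s) with (ln (s * s)) by (rewrite ln_mult by lra; ring).
    rewrite <- ln_mult by nra. split; apply ln_le; simpl; nra. }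
  replace (1 - ln 3 * / ell s) with ((ell s - ln 3) / ell s) by (field; lra).
  split.
  - apply Rmult_le_compat_r; [left; apply Rinv_0_lt_compat|]; lra.
  - apply (Rdiv_le_1 (2 * ln s) (ell s)); lra.
Qed.

Section ExplicitTail.

Variables p alpha : R.
Hypothesis hp : 1 < p.

Definition rhs_inv (s : R) : R := exp (- (p * ln s + alpha * ln (ell s))).

Definition tail_approx (s : R) : R := exp ((1 - p) * ln s - alpha * ln (ell s)) / (p - 1).

Definition tail_approx_defect (s : R) : R := 2 * alpha * s ^ 2 / ((p - 1) * (s ^ 2 + 2) * ell s).

Lemma rhs_eq_inv s : rhs p alpha s = / rhs_inv s.
Proof. unfold rhs, Rpower, rhs_inv, ell. rewrite exp_Ropp, exp_plus, Rinv_inv. reflexivity. Qed.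

Lemma rhs_inv_pos s : 0 < rhs_inv s.
Proof. apply exp_pos. Qed.

Let rhs_inv_pos_on : forall s, 0 < s -> 0 < rhs_inv s := fun s _ => rhs_inv_pos s.

Lemma rhs_inv_continuous s : 0 < s -> continuous rhs_inv s.
Proof.
  intros Hs. apply (ex_derive_continuous (K := R_AbsRing) (V := R_NormedModule)).
  pose proof (ell_pos s) as Hell. unfold ell in Hell.
  simpl in Hell. unfold rhs_inv, ell. auto_derive. repeat split; nra.
Qed.

Lemma rhs_inv_ge_inv : exists c, 0 < c /\ forall s, 0 < s <= 1 -> c / s <= rhs_inv s.
Proof.
  set (K := Rabs (ln (ln 2)) + Rabs (ln (ln 3))).
  exists (exp (- (Rabs alpha * K))). split; [apply exp_pos|]. intros s [Hs0 Hs1].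
  assert (Hln_s : ln s <= 0) by (rewrite <- ln_1; apply ln_le; lra).
  assert (Hln2 : 0 < ln 2) by (rewrite <- ln_1; apply ln_increasing; lra).
  assert (Hell : ln (ln 2) <= ln (ell s) <= ln (ln 3)).
  { unfold ell. split; apply ln_le; try apply ln_le; simpl; try nra.
    pose proof (ell_pos s). unfold ell in *. simpl in *. lra. }
  assert (Hlnell : alpha * ln (ell s) <= Rabs alpha * K).
  { apply Rle_trans with (Rabs alpha * Rabs (ln (ell s))); [rewrite <- Rabs_mult; apply Rle_abs|].
    apply Rmult_le_compat_l; [apply Rabs_pos|]. apply Rabs_le. unfold K.
    pose proof (Rle_abs (ln (ln 3))). pose proof (Rle_abs (- ln (ln 2))). rewrite Rabs_Ropp in *.
    pose proof (Rabs_pos (ln (ln 2))). pose proof (Rabs_pos (ln (ln 3))). lra. }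
  replace (exp (- (Rabs alpha * K)) / s) with (exp (- ln s + - (Rabs alpha * K)))
    by (rewrite exp_plus, exp_Ropp, exp_ln by lra; field; lra).
  apply exp_le_compat. nra.
Qed.

Lemma tail_approx_pos s : 0 < tail_approx s.
Proof. apply Rdiv_lt_0_compat; [apply exp_pos | lra]. Qed.

Lemma tail_approx_derive s : 0 < s ->
  is_derive tail_approx s (- rhs_inv s * (1 + tail_approx_defect s)).
Proof.
  intros Hs. pose proof (ell_pos s) as Hell.
  assert (Hexp : exp ((1 - p) * ln s - alpha * ln (ell s)) = s * rhs_inv s).
  { unfold rhs_inv.
    replace ((1 - p) * ln s - alpha * ln (ell s))
      with (ln s + - (p * ln s + alpha * ln (ell s))) by ring.
    rewrite exp_plus, exp_ln by lra. reflexivity. }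
  unfold tail_approx, tail_approx_defect. unfold ell in *. simpl in Hell. auto_derive.
  - repeat split; nra.
  - simpl in Hexp |- *. replace (exp _) with (s * rhs_inv s) by (rewrite <- Hexp; f_equal; ring).
    field. repeat split; nra.
Qed.

Lemma tail_approx_defect_lim : is_lim tail_approx_defect p_infty 0.
Proof.
  set (c := 2 * alpha / (p - 1)).
  assert (Hlim : forall k, is_lim (fun s => k * / ell s) p_infty 0).
  { intros k. replace (Finite 0) with (Rbar_mult k 0) by (simpl; f_equal; ring).
    apply (is_lim_mult (fun _ => k) (fun s => / ell s));
      [apply is_lim_const | apply inv_ell_lim | simpl; auto]. }
  refine (is_lim_le_le_loc _ _ _ p_infty 0 _ (Hlim (- Rabs c)) (Hlim (Rabs c))).
  exists 0. intros s _. pose proof (ell_pos s) as Hell.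
  assert (Hdefect : tail_approx_defect s = c * (s ^ 2 / (s ^ 2 + 2)) * / ell s)
    by (unfold tail_approx_defect, c; field; repeat split; nra).
  assert (Hq : 0 <= s ^ 2 / (s ^ 2 + 2) <= 1).
  { split; [apply Rdiv_le_0_compat | apply (Rdiv_le_1 (s ^ 2) (s ^ 2 + 2))]; nra. }
  rewrite Hdefect. set (q := s ^ 2 / (s ^ 2 + 2)) in *.
  assert (Hcq : Rabs (c * q) <= Rabs c).
  { rewrite Rabs_mult, (Rabs_right q) by lra. pose proof (Rabs_pos c). nra. }
  pose proof (Rle_abs (c * q)). pose proof (Rle_abs (- (c * q))). rewrite Rabs_Ropp in *.
  pose proof (Rinv_0_lt_compat _ Hell). split; apply Rmult_le_compat_r; lra.
Qed.

Lemma tail_approx_lim : is_lim tail_approx p_infty 0.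
Proof.
  set (E := fun s => ell s * ((1 - p) / 2 * (2 * ln s / ell s) + (- alpha) * (ln (ell s) / ell s))).
  assert (HE : is_lim E p_infty m_infty).
  { apply (is_lim_mult_pinfty_neg _ _ _ ((1 - p) / 2 * 1 + (- alpha) * 0) ell_lim); [|lra].
    apply filterlim_Rplus; apply filterlim_Rmult;
      try apply filterlim_const; [apply two_ln_div_ell_lim | apply ln_ell_div_ell_lim]. }
  assert (HexpE : filterlim (fun s => exp (E s)) (Rbar_locally p_infty) (locally 0)).
  { apply (is_lim_comp exp E p_infty 0 m_infty is_lim_exp_m HE). exists 0. intros. discriminate. }
  apply (is_lim_ext (fun s => exp (E s) * / (p - 1))).
  - intros s. pose proof (ell_pos s). unfold tail_approx, E, Rdiv. f_equal. f_equal. field. lra.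
  - pose proof (filterlim_Rmult _ _ _ _ HexpE (filterlim_const (/ (p - 1)))) as Hlim.
    rewrite Rmult_0_l in Hlim. exact Hlim.
Qed.

Lemma rhs_inv_tail_primitive_exists : exists G, is_tail_primitive rhs_inv G.
Proof.
  apply (tail_primitive_exists rhs_inv tail_approx tail_approx_defect rhs_inv_pos_on).
  - exact rhs_inv_continuous.
  - exact rhs_inv_ge_inv.
  - intros s _. apply tail_approx_pos.
  - exact tail_approx_derive.
  - exact tail_approx_defect_lim.
Qed.

Lemma ln_tail_approx s : 0 < s ->
  ln (tail_approx s) = (1 - p) * ln s - alpha * ln (ell s) - ln (p - 1).
Proof.
  intros Hs. unfold tail_approx. rewrite ln_div, ln_exp; [reflexivity | apply exp_pos | lra].
Qed.

Lemma ln_time_ratio_eq s tau : 0 < s -> 0 < tau ->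
  2 * ln s / ell s + (2 * alpha / (p - 1)) * (ln (ell s) / ell s)
  + (2 * ln (p - 1) / (p - 1)) * / ell s
  + (- (2 / (p - 1))) * (- ln (tail_approx s / tau) * / ell s)
  = 2 * - ln tau / ((p - 1) * ell s).
Proof.
  intros Hs Htau. pose proof (ell_pos s). pose proof (tail_approx_pos s).
  rewrite ln_div, ln_tail_approx by lra. field. lra.
Qed.

Lemma profile_ratio_eq T t s : 0 < s -> 0 < T - t < 1 ->
  s / profile p alpha T t =
  exp ((- ln (tail_approx s / (T - t))
        + alpha * ln (2 * - ln (T - t) / ((p - 1) * ell s))) / (p - 1)).
Proof.
  intros Hs Ht. pose proof (ell_pos s). pose proof (tail_approx_pos s).
  assert (Hln : ln (T - t) < 0) by (rewrite <- ln_1; apply ln_increasing; lra).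
  unfold profile, kappa, Rpower. rewrite Rabs_left by lra. rewrite <- !exp_plus.
  rewrite <- (exp_ln s) at 1 by lra. unfold Rdiv at 1. rewrite <- exp_Ropp, <- exp_plus. f_equal.
  rewrite (ln_div (tail_approx s)), ln_tail_approx by lra.
  rewrite (ln_div (2 * - ln (T - t))) by (try apply Rmult_lt_0_compat; lra).
  rewrite (ln_div (p - 1) 2), (ln_mult 2), (ln_mult (p - 1) (ell s)) by lra.
  field. lra.
Qed.

Section LevelSetAsymptotics.

Variables (G : R -> R) (T : R) (psi : R -> R).
Hypothesis G_tail : is_tail_primitive rhs_inv G.
Hypothesis T_pos : 0 < T.
Hypothesis psi_level : forall t, 0 < t < T -> 0 < psi t /\ G (psi t) = T - t.

Lemma level_set_blowup_solution : blowup_solution p alpha T psi.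
Proof.
  split; [|split].
  - intros t Ht. apply psi_level. auto.
  - intros t Ht. rewrite rhs_eq_inv.
    apply (level_set_derive rhs_inv G T rhs_inv_pos_on); auto.
  - apply (level_set_blowup rhs_inv G T rhs_inv_pos_on); auto.
Qed.

Lemma blowup_solution_eq_level_set phi :
  blowup_solution p alpha T phi -> forall t, 0 < t < T -> phi t = psi t.
Proof.
  intros [phi_pos [phi_derive phi_blowup]] t Ht.
  apply (tail_primitive_inj rhs_inv G rhs_inv_pos_on G_tail); [auto | apply psi_level; auto |].
  rewrite (proj2 (psi_level t Ht)).
  apply (blowup_solution_on_level_set rhs_inv G T rhs_inv_pos_on G_tail T_pos); auto.
  intros x Hx. rewrite <- rhs_eq_inv. auto.
Qed.

Let psi_blowup : filterlim psi (at_left T) (Rbar_locally p_infty) :=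
  level_set_blowup rhs_inv G T rhs_inv_pos_on G_tail T_pos psi psi_level.

Let along_psi (h : R -> R) (l : R) :
  filterlim h (Rbar_locally p_infty) (locally l) ->
  filterlim (fun t => h (psi t)) (at_left T) (locally l) :=
  fun Hh => filterlim_comp _ _ _ psi h _ _ _ psi_blowup Hh.

Lemma ln_approx_ratio_lim :
  filterlim (fun t => - ln (tail_approx (psi t) / (T - t))) (at_left T) (locally 0).
Proof.
  apply (filterlim_ext_loc (fun t => - ln (tail_approx (psi t) / G (psi t)))).
  - apply (filter_imp (fun t => 0 < t < T)); [|apply at_left_interval; lra].
    intros t Ht. rewrite (proj2 (psi_level t Ht)). reflexivity.
  - assert (Hequiv : filterlim (fun s => tail_approx s / G s) (Rbar_locally p_infty) (locally 1)).
    { apply (tail_primitive_equiv rhs_inv tail_approx tail_approx_defect rhs_inv_pos_on); auto.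
      - apply tail_approx_derive.
      - apply tail_approx_defect_lim.
      - apply tail_approx_lim. }
    assert (Hcont : continuous (fun x => - ln x) 1).
    { apply (ex_derive_continuous (K := R_AbsRing) (V := R_NormedModule)). auto_derive. lra. }
    pose proof (filterlim_continuous_comp _ _ 1 (along_psi _ _ Hequiv) Hcont) as Hlim.
    cbv beta in Hlim. rewrite ln_1, Ropp_0 in Hlim. exact Hlim.
Qed.

Lemma ln_time_ratio_lim :
  filterlim (fun t => 2 * - ln (T - t) / ((p - 1) * ell (psi t))) (at_left T) (locally 1).
Proof.
  apply (filterlim_ext_loc (fun t =>
      2 * ln (psi t) / ell (psi t) + (2 * alpha / (p - 1)) * (ln (ell (psi t)) / ell (psi t))
      + (2 * ln (p - 1) / (p - 1)) * / ell (psi t)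
      + (- (2 / (p - 1))) * (- ln (tail_approx (psi t) / (T - t)) * / ell (psi t)))).
  - apply (filter_imp (fun t => 0 < t < T)); [|apply at_left_interval; lra].
    intros t Ht. apply ln_time_ratio_eq; [apply psi_level | ]; lra.
  - pose proof (along_psi _ _ inv_ell_lim) as Hinv.
    pose proof (filterlim_Rplus _ _ _ _ (filterlim_Rplus _ _ _ _ (filterlim_Rplus _ _ _ _
      (along_psi _ _ two_ln_div_ell_lim)
      (filterlim_Rmult _ _ _ _ (filterlim_const (2 * alpha / (p - 1)))
        (along_psi _ _ ln_ell_div_ell_lim)))
      (filterlim_Rmult _ _ _ _ (filterlim_const (2 * ln (p - 1) / (p - 1))) Hinv))
      (filterlim_Rmult _ _ _ _ (filterlim_const (- (2 / (p - 1))))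
        (filterlim_Rmult _ _ _ _ ln_approx_ratio_lim Hinv))) as Hlim.
    rewrite !Rmult_0_r, !Rplus_0_r in Hlim. exact Hlim.
Qed.

Lemma level_set_profile :
  filterlim (fun t => psi t / profile p alpha T t) (at_left T) (locally 1).
Proof.
  set (A := fun t => - ln (tail_approx (psi t) / (T - t))).
  set (Rt := fun t => 2 * - ln (T - t) / ((p - 1) * ell (psi t))).
  apply (filterlim_ext_loc (fun t => exp ((A t + alpha * ln (Rt t)) / (p - 1)))).
  - apply (filter_imp (fun t => Rmax 0 (T - 1) < t < T));
      [|apply at_left_interval, Rmax_lub_lt; lra].
    intros t Ht. pose proof (Rmax_l 0 (T - 1)). pose proof (Rmax_r 0 (T - 1)).
    symmetry. apply profile_ratio_eq; [apply psi_level |]; lra.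
  - pose proof (filterlim_continuous_comp Rt ln 1 ln_time_ratio_lim
      (continuous_ln 1 ltac:(lra))) as Hln.
    pose proof (filterlim_continuous_comp _ exp _
      (filterlim_Rmult _ _ _ _ (filterlim_Rplus _ _ _ _ ln_approx_ratio_lim
         (filterlim_Rmult _ _ _ _ (filterlim_const alpha) Hln)) (filterlim_const (/ (p - 1))))
      (continuous_exp _)) as Hlim.
    rewrite ln_1, Rmult_0_r, Rplus_0_r, Rmult_0_l, exp_0 in Hlim. exact Hlim.
Qed.

End LevelSetAsymptotics.

End ExplicitTail.

Theorem lemmaA1 (p alpha : R) (hp : 1 < p) (T : R) (hT : 0 < T) :
  exists psi : R -> R,
    blowup_solution p alpha T psi /\
    (forall phi : R -> R, blowup_solution p alpha T phi ->
       forall t, 0 < t < T -> phi t = psi t) /\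
    filterlim (fun t => psi t / profile p alpha T t) (at_left T) (locally 1).
Proof.
  destruct (rhs_inv_tail_primitive_exists p alpha hp) as [G HG].
  destruct (tail_primitive_inverse_exists (rhs_inv p alpha) G T HG) as [psi Hpsi].
  exists psi. split; [|split].
  - eapply level_set_blowup_solution; eauto.
  - eapply blowup_solution_eq_level_set; eauto.
  - eapply level_set_profile; eauto.
Qed.
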